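(* Let $c\in\mathbb{N}$ and let $F$ be a double-fan on at least $8c^2+2c+1$ vertices, with centres $v_1,v_2$. Let $\mathcal{P},\mathcal{Q}$ be partitions of $F$ such that $\mathcal{P}$ is a tree-partition and $|P\cap Q|\leq c$ for all $P\in\mathcal{P}$ and $Q\in\mathcal{Q}$. For a vertex $v_i$, let $P_i$ and $Q_i$ denote the parts of $\mathcal{P}$ and $\mathcal{Q}$ containing $v_i$. If $P_1\neq P_2$ and $Q_1\neq Q_2$, then there exist vertices $v_3,v_4$ of $F$ such that $\{v_1,v_2,v_3,v_4\}$ is a $4$-clique in $F$ and $Q_1,Q_2,Q_3,Q_4$ are pairwise distinct.
   Context: All graphs are finite, simple and undirected. A partition $\mathcal{P}$ of a graph $G$ is a partition of $V(G)$ into parts. The quotient $G/\mathcal{P}$ is the graph whose vertices are the non-empty parts of $\mathcal{P}$, where distinct parts $P_1,P_2$ are adjacent iff some $v_1\in P_1$ and $v_2\in P_2$ satisfy $v_1v_2\in E(G)$. $\mathcal{P}$ is a tree-partition if $G/\mathcal{P}$ is isomorphic to a subgraph of a tree. A vertex is dominant if it is adjacent to every other vertex. A graph $F$ is a double-fan if it has two dominant vertices $v$ and $w$, called the centres, such that $F-v-w$ is a path. *)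

From mathcomp Require Import all_boot.
Set Implicit Arguments. Unset Strict Implicit. Unset Printing Implicit Defensive.

Definition simple_graph (T : finType) (e : rel T) : Prop :=
  symmetric e /\ irreflexive e.

Definition is_tree (U : finType) (t : rel U) : Prop :=
  simple_graph t /\
  (forall x y : U, connect t x y) /\
  (forall s : seq U, uniq s -> 3 <= size s -> ~~ cycle t s).

Definition is_partition (T : finType) (P : {set {set T}}) : Prop :=
  partition P [set: T].

Definition quot_adj (T : finType) (e : rel T) (P1 P2 : {set T}) : Prop :=
  P1 != P2 /\ exists v1 v2, [/\ v1 \in P1, v2 \in P2 & e v1 v2].

(* P is a tree-partition: G/P is isomorphic to a subgraph of a tree, i.e. there
   is a tree (U,t) and an injective map of the parts into U sending quotient
   edges to tree edges. *)
Definition tree_partition (T : finType) (e : rel T) (P : {set {set T}}) : Prop :=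
  is_partition P /\
  exists (U : finType) (t : rel U), is_tree t /\
    exists f : {set T} -> U,
      {in P &, injective f} /\
      (forall P1 P2, P1 \in P -> P2 \in P -> quot_adj e P1 P2 -> t (f P1) (f P2)).

Definition dominant (T : finType) (e : rel T) (v : T) : Prop :=
  forall x, x != v -> e v x.

(* G - v - w is a path: its vertices can be listed without repetition as
   x_0, ..., x_(m-1) with x_i ~ x_j iff |i - j| = 1. *)
Definition minus2_is_path (T : finType) (e : rel T) (v w : T) : Prop :=
  exists s : seq T,
    [/\ uniq s,
        (forall x, (x \in s) = (x != v) && (x != w)) &
        (forall i j, i < size s -> j < size s ->
           e (nth v s i) (nth v s j) = ((i == j.+1) || (j == i.+1)))].

Definition double_fan (T : finType) (e : rel T) (v w : T) : Prop :=
  [/\ simple_graph e, v != w, dominant e v, dominant e w & minus2_is_path e v w].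

From mathcomp Require Import all_boot zify.
Set Implicit Arguments. Unset Strict Implicit. Unset Printing Implicit Defensive.

(* Since the quotient by the tree-partition P contains no triangle, every vertex
   of the double fan lies in the part of v1 or of v2 in P; hence every part of Q
   has at most 2c vertices, and the parts Q1, Q2 together at most 4c. Mark the
   vertices of the path F - v1 - v2 lying in Q1 or Q2. If two consecutive
   unmarked vertices lie in distinct parts of Q, they extend v1 v2 to the
   required clique. Otherwise each of the at most 4c - 1 maximal unmarked runs
   of the path lies in a single part of Q, so the path has at most
   (4c - 2) + (4c - 1) 2c vertices, which is too few. *)


Section Runs.

Variables (T X : eqType) (g : pred T) (q : T -> X).

Definition constant_on_runs (s : seq T) : bool :=
  sorted (fun a b => ~~ g a ==> ~~ g b ==> (q a == q b)) s.

Definition run_class (a : T) : pred T := fun y => ~~ g y && (q y == q a).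

(* [find g s] is the length of the leading run of unmarked elements of [s]. *)
Lemma find_le_count_run_class a s :
  constant_on_runs (a :: s) -> find g (a :: s) <= count (run_class a) (a :: s).
Proof.
elim: s a => [|b s IH] a; rewrite /constant_on_runs /run_class /= eqxx.
  by case: (g a).
case: (g a) => //= /andP[hab hs]; case gb: (g b) => //.
by move: hab (IH b hs); rewrite /= /run_class /= gb => /eqP->; rewrite eqxx.
Qed.

Lemma size_le_runs k s :
  constant_on_runs s -> {in s, forall a, count (run_class a) s <= k} ->
  size s <= count g s + (count g s).+1 * k.
Proof.
move=> hs hk.
(* Each marked element closes a run, which has at most [k] elements as [q] is
   constant on it; [find g s] is the length of the run still open. *)
suff: size s <= count g s * k.+1 + find g s /\ find g s <= k by lia.
elim: s hs hk => [|a s IH] // hs hk.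
have find_le_k : find g (a :: s) <= k.
  by apply: leq_trans (find_le_count_run_class hs) (hk a (mem_head _ _)).
split; last exact: find_le_k.
have IHs : size s <= count g s * k.+1 + find g s /\ find g s <= k.
  apply: IH; first exact: path_sorted hs.
  move=> b hb; have /hk : b \in a :: s by rewrite inE hb orbT.
  apply: leq_trans; exact: leq_addl.
by move: find_le_k => /=; case: (g a) => /=; lia.
Qed.

End Runs.

Lemma not_sorted_nth (T : Type) (r : rel T) (x0 : T) (s : seq T) :
  ~~ sorted r s -> exists2 i, i.+1 < size s & ~~ r (nth x0 s i) (nth x0 s i.+1).
Proof.
elim: s => [|a [|b s] IH] //=; case rab: (r a b) => /= hs.
- by have [i hi hr] := IH hs; exists i.+1.
- by exists 0; rewrite ?rab.
Qed.

Lemma count_le_card (T : finType) (p : pred T) (A : {set T}) (s : seq T) :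
  uniq s -> {in s, forall x, p x -> x \in A} -> count p s <= #|A|.
Proof.
move=> s_uniq sA; rewrite -size_filter -(card_uniqP (filter_uniq p s_uniq)).
by apply/subset_leq_card/subsetP => x; rewrite mem_filter => /andP[/sA].
Qed.

Lemma card_le_sum_setI (T : finType) (A1 A2 L : {set T}) :
  (forall x, x \in A1 :|: A2) -> #|L| <= #|L :&: A1| + #|L :&: A2|.
Proof.
move=> cover; apply: leq_trans (leq_card_setU _ _); rewrite -setIUr.
by apply/subset_leq_card/subsetP => x xL; rewrite inE xL cover.
Qed.

Section Partition.

Variables (T : finType) (P : {set {set T}}).
Hypothesis P_partition : is_partition P.

Lemma mem_pblock_partition x : x \in pblock P x.
Proof. by case/and3P: P_partition => /eqP cover_P _ _; rewrite mem_pblock cover_P inE. Qed.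

Lemma pblock_partition_mem x : pblock P x \in P.
Proof. by case/and3P: P_partition => /eqP cover_P _ _; rewrite pblock_mem // cover_P inE. Qed.

End Partition.

Lemma tree_partition_triangle (T : finType) (e : rel T) (P : {set {set T}}) x y z :
  tree_partition e P -> e x y -> e y z -> e z x ->
  [|| pblock P x == pblock P y, pblock P y == pblock P z | pblock P z == pblock P x].
Proof.
case=> hP [U [t [[_ [_ acyclic]] [f [f_inj f_adj]]]]] exy eyz ezx.
apply/negPn/negP => /norP[hxy /norP[hyz hzx]].
have quotient_edge u w : e u w -> pblock P u != pblock P w ->
    t (f (pblock P u)) (f (pblock P w)).
  move=> euw huw; apply: f_adj; rewrite ?pblock_partition_mem //.
  by split=> //; exists u, w; rewrite !mem_pblock_partition.
have f_neq u w : pblock P u != pblock P w -> f (pblock P u) != f (pblock P w).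
  by apply: contra => /eqP/f_inj-> //; rewrite pblock_partition_mem.
have uniq_xyz : uniq [:: f (pblock P x); f (pblock P y); f (pblock P z)].
  by rewrite /= !inE !negb_or !f_neq // eq_sym.
by have := acyclic _ uniq_xyz isT; rewrite /= !quotient_edge.
Qed.

Lemma double_fan_cover (T : finType) (e : rel T) (v1 v2 : T) (P : {set {set T}}) :
  double_fan e v1 v2 -> tree_partition e P -> pblock P v1 != pblock P v2 ->
  forall x, x \in pblock P v1 :|: pblock P v2.
Proof.
move=> [[e_sym _] v12 dom1 dom2 _] hP hP12 x; have P_partition := proj1 hP.
rewrite inE; have [-> | xv1] := eqVneq x v1; first by rewrite mem_pblock_partition.
have [-> | xv2] := eqVneq x v2; first by rewrite mem_pblock_partition ?orbT.
have := tree_partition_triangle hP (dom1 v2 _) (dom2 x xv2) _.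
rewrite eq_sym v12 e_sym dom1 // (negbTE hP12) => /(_ isT isT) /= /orP[]/eqP hx.
- by rewrite hx mem_pblock_partition ?orbT.
- by rewrite -hx mem_pblock_partition.
Qed.

Definition rainbow_K4 (T : finType) (e : rel T) (Q : {set {set T}}) (v1 v2 v3 v4 : T) : Prop :=
  [&& e v1 v2, e v1 v3, e v1 v4, e v2 v3, e v2 v4 & e v3 v4] /\
  [&& pblock Q v1 != pblock Q v2, pblock Q v1 != pblock Q v3,
      pblock Q v1 != pblock Q v4, pblock Q v2 != pblock Q v3,
      pblock Q v2 != pblock Q v4 & pblock Q v3 != pblock Q v4].

Section FanPath.

Variables (T : finType) (e : rel T) (v1 v2 : T) (s : seq T).
Hypotheses (v12 : v1 != v2) (dom1 : dominant e v1) (dom2 : dominant e v2).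
Hypotheses (s_uniq : uniq s) (s_mem : forall x, (x \in s) = (x != v1) && (x != v2)).
Hypothesis s_adj : forall i j, i < size s -> j < size s ->
  e (nth v1 s i) (nth v1 s j) = (i == j.+1) || (j == i.+1).

Lemma uniq_fan_vertices : uniq [:: v1, v2 & s].
Proof. by rewrite /= !inE negb_or v12 !s_mem !eqxx /= andbF s_uniq. Qed.

Lemma card_fan : #|T| = (size s).+2.
Proof.
rewrite -[(size s).+2]/(size [:: v1, v2 & s]) -(card_uniqP uniq_fan_vertices).
apply: eq_card => x.
by rewrite !inE s_mem; case: (x =P v1); case: (x =P v2).
Qed.

Variables (Q : {set {set T}}) (k : nat).
Hypotheses (Q_partition : is_partition Q) (Q_small : forall L, L \in Q -> #|L| <= k).

Let central y := (pblock Q y == pblock Q v1) || (pblock Q y == pblock Q v2).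

Lemma count_central : count central s + 2 <= 2 * k.
Proof.
have central_Q12 : {in [:: v1, v2 & s], forall x,
    central x -> x \in pblock Q v1 :|: pblock Q v2}.
  by move=> x _ /orP[]/eqP<-; rewrite in_setU mem_pblock_partition ?orbT.
have := count_le_card uniq_fan_vertices central_Q12.
rewrite /= /central !eqxx orbT add1n add1n addn2 => /leq_trans; apply.
rewrite mul2n -addnn; apply: leq_trans (leq_card_setU _ _) _.
by rewrite leq_add // Q_small ?pblock_partition_mem.
Qed.

Lemma card_fan_le_of_runs :
  constant_on_runs central (pblock Q) s -> #|T| <= 2 * k ^ 2 + k.
Proof.
move=> runs.
have class_small : {in s, forall a, count (run_class central (pblock Q) a) s <= k}.
  move=> a _; apply: leq_trans (Q_small (pblock_partition_mem Q_partition a)).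
  apply: count_le_card s_uniq _ => x _ /andP[_ /eqP<-].
  exact: mem_pblock_partition.
move: count_central (size_le_runs runs class_small).
by rewrite card_fan; move: (count central s) (size s) => b m; nia.
Qed.

Lemma fan_rainbow_K4_of_run_change : pblock Q v1 != pblock Q v2 ->
  ~~ constant_on_runs central (pblock Q) s -> exists v3 v4, rainbow_K4 e Q v1 v2 v3 v4.
Proof.
move=> Q12 /(not_sorted_nth v1)[i hi].
set a := nth v1 s i; set b := nth v1 s i.+1.
rewrite !negb_imply => /and3P[ca cb Qab].
have /andP[a1 a2] : (a != v1) && (a != v2) by rewrite -s_mem mem_nth // ltnW.
have /andP[b1 b2] : (b != v1) && (b != v2) by rewrite -s_mem mem_nth.
exists a, b; split.
  have e12 : e v1 v2 by apply: dom1; rewrite eq_sym.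
  by rewrite e12 (dom1 a1) (dom1 b1) (dom2 a2) (dom2 b2) s_adj ?eqxx ?orbT // ltnW.
rewrite Q12 Qab !(eq_sym (pblock Q v1)) !(eq_sym (pblock Q v2)).
by move: ca cb; rewrite /central !negb_or => /andP[-> ->] /andP[-> ->].
Qed.

Lemma fan_rainbow_K4 : 2 * k ^ 2 + k < #|T| -> pblock Q v1 != pblock Q v2 ->
  exists v3 v4, rainbow_K4 e Q v1 v2 v3 v4.
Proof.
move=> large Q12; have [runs | ] := boolP (constant_on_runs central (pblock Q) s).
  by have := card_fan_le_of_runs runs; rewrite leqNgt large.
exact: fan_rainbow_K4_of_run_change.
Qed.

End FanPath.

Theorem lemma4p3 (c : nat) (T : finType) (e : rel T) (v1 v2 : T)
    (P Q : {set {set T}}) :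
  double_fan e v1 v2 ->
  8 * c ^ 2 + 2 * c + 1 <= #|T| ->
  tree_partition e P ->
  is_partition Q ->
  (forall A B, A \in P -> B \in Q -> #|A :&: B| <= c) ->
  pblock P v1 != pblock P v2 ->
  pblock Q v1 != pblock Q v2 ->
  exists v3 v4 : T,
    [&& e v1 v2, e v1 v3, e v1 v4, e v2 v3, e v2 v4 & e v3 v4] /\
        [&& pblock Q v1 != pblock Q v2, pblock Q v1 != pblock Q v3,
            pblock Q v1 != pblock Q v4, pblock Q v2 != pblock Q v3,
            pblock Q v2 != pblock Q v4 & pblock Q v3 != pblock Q v4].
Proof.
move=> hF hT hP hQ hPQ hP12 hQ12.
have P_partition : is_partition P by case: hP.
have Q_small L : L \in Q -> #|L| <= 2 * c.
  move=> hL; apply: leq_trans (card_le_sum_setI _ (double_fan_cover hF hP hP12)) _.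
  by rewrite mul2n -addnn leq_add // setIC hPQ ?pblock_partition_mem.
have [_ v12 dom1 dom2 [s [s_uniq s_mem s_adj]]] := hF.
apply: (fan_rainbow_K4 v12 dom1 dom2 s_uniq s_mem s_adj hQ Q_small) => //.
by apply: leq_trans hT; rewrite expnMn; lia.
Qed.
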